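(* Let $X$ be a spatially independent random subcomplex of $\triangle_n$. Then for every $Y\in S_n$ and all $Z_1\subset Z_2$ in $S_n$ with $\mathbb{P}(Z_2\subset X)>0$, \[ \mathbb{P}(Y\subset X\mid Z_1\subset X)\le\mathbb{P}(Y\subset X\mid Z_2\subset X). \]
   Context: $\triangle_n=2^{[n]}$; $S_n$ is the set of subcomplexes of $\triangle_n$ (families of subsets of $[n]$ closed under taking subsets); a random subcomplex is an $S_n$-valued random variable. $X$ is spatially independent if $\mathbb{P}(Y_1\cup Y_2\subset X)\,\mathbb{P}(Y_1\cap Y_2\subset X)=\mathbb{P}(Y_1\subset X)\,\mathbb{P}(Y_2\subset X)$ for all $Y_1,Y_2\in S_n$. *)

From HB Require Import structures.
From mathcomp Require Import all_boot all_order all_algebra.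
Set Implicit Arguments. Unset Strict Implicit. Unset Printing Implicit Defensive.
Import Order.TTheory GRing.Theory Num.Theory.
Local Open Scope ring_scope.

(* Vertex set [n] is 'I_n; the full simplex triangle_n = 2^[n] is {set 'I_n}. *)
Definition is_complex (n : nat) (K : {set {set 'I_n}}) : bool :=
  [forall s : {set 'I_n}, forall t : {set 'I_n},
     (s \in K) && (t \subset s) ==> (t \in K)].

Definition Sn (n : nat) := {K : {set {set 'I_n}} | is_complex K}.

(* A random subcomplex X: a probability distribution mu on S_n
   (values in a real field R). *)
Definition is_distr (R : realFieldType) (n : nat) (mu : Sn n -> R) : Prop :=
  (forall K, 0 <= mu K) /\ \sum_(K : Sn n) mu K = 1.

Definition PrSub (R : realFieldType) (n : nat) (mu : Sn n -> R)
  (Y : {set {set 'I_n}}) : R :=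
  \sum_(K : Sn n | Y \subset val K) mu K.

Definition CondPrSub (R : realFieldType) (n : nat) (mu : Sn n -> R)
  (Y Z : {set {set 'I_n}}) : R :=
  (\sum_(K : Sn n | (Y \subset val K) && (Z \subset val K)) mu K) / PrSub mu Z.

Definition spatially_independent (R : realFieldType) (n : nat) (mu : Sn n -> R)
  : Prop :=
  forall Y1 Y2 : Sn n,
    PrSub mu (val Y1 :|: val Y2) * PrSub mu (val Y1 :&: val Y2)
    = PrSub mu (val Y1) * PrSub mu (val Y2).

From HB Require Import structures.
From mathcomp Require Import all_boot all_order all_algebra.
Import Order.TTheory GRing.Theory Num.Theory.
Local Open Scope ring_scope.

(* Apply spatial independence to Y1 := Y u Z1 and Y2 := Z2. Since Z1 c Z2,
   Y1 u Y2 = Y u Z2, while Z1 c Y1 n Y2, so P(Y1 n Y2 c X) <= P(Z1 c X). This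
   gives P(Y u Z2) P(Z1) >= P(Y u Z1) P(Z2), which is the claimed inequality
   between P(Y u Z1)/P(Z1) and P(Y u Z2)/P(Z2) after clearing denominators. *)

Lemma is_complexU {n : nat} {K1 K2 : {set {set 'I_n}}} :
  is_complex K1 -> is_complex K2 -> is_complex (K1 :|: K2).
Proof.
move=> /forallP cK1 /forallP cK2.
apply/forallP => s; apply/forallP => t; apply/implyP.
rewrite !inE => /andP [/orP [sK1 | sK2] ts].
- by have /forallP /(_ t) /implyP -> := cK1 s; rewrite ?sK1.
- by have /forallP /(_ t) /implyP -> := cK2 s; rewrite ?sK2 ?orbT.
Qed.

Definition Sn_union {n : nat} (A B : Sn n) : Sn n :=
  exist _ (val A :|: val B) (is_complexU (valP A) (valP B)).

Section PrSub.

Variables (R : realFieldType) (n : nat) (mu : Sn n -> R).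
Hypothesis mu_ge0 : forall K, 0 <= mu K.

Lemma PrSub_ge0 (S : {set {set 'I_n}}) : 0 <= PrSub mu S.
Proof. by apply: sumr_ge0 => K _. Qed.

Lemma PrSub_le (S T : {set {set 'I_n}}) :
  S \subset T -> PrSub mu T <= PrSub mu S.
Proof.
move=> ST; rewrite /PrSub [leRHS](bigID (fun K : Sn n => T \subset val K)) /=.
under [X in _ <= X + _]eq_bigl => K do
  rewrite (andb_idl (subset_trans ST)).
by rewrite lerDl sumr_ge0.
Qed.

End PrSub.

Lemma CondPrSubE (R : realFieldType) (n : nat) (mu : Sn n -> R)
  (Y Z : {set {set 'I_n}}) :
  CondPrSub mu Y Z = PrSub mu (Y :|: Z) / PrSub mu Z.
Proof. by rewrite /CondPrSub /PrSub; under eq_bigl => K do rewrite -subUset. Qed.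

Lemma PrSub_setU_cross_le (R : realFieldType) (n : nat) (mu : Sn n -> R)
  (mu_ge0 : forall K, 0 <= mu K) (Hind : spatially_independent mu)
  (Y Z1 Z2 : Sn n) : val Z1 \subset val Z2 ->
  PrSub mu (val Y :|: val Z1) * PrSub mu (val Z2) <=
  PrSub mu (val Y :|: val Z2) * PrSub mu (val Z1).
Proof.
move=> Z12; have := Hind (Sn_union Y Z1) Z2; rewrite /= -setUA (setUidPr Z12).
move=> <-; apply: ler_wpM2l; first exact: PrSub_ge0.
by apply: PrSub_le => //; rewrite subsetI subsetUr.
Qed.

Theorem mainTheorem7 (R : realFieldType) (n : nat) (mu : Sn n -> R)
  (Hmu : is_distr mu) (Hind : spatially_independent mu)
  (Y Z1 Z2 : Sn n) (HZ : val Z1 \subset val Z2)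
  (Hpos : 0 < PrSub mu (val Z2)) :
  CondPrSub mu (val Y) (val Z1) <= CondPrSub mu (val Y) (val Z2).
Proof.
have mu_ge0 := Hmu.1.
have PZ1_gt0 : 0 < PrSub mu (val Z1).
  by apply: lt_le_trans Hpos _; exact: PrSub_le.
rewrite !CondPrSubE ler_pdivrMr // mulrAC ler_pdivlMr //.
exact: PrSub_setU_cross_le.
Qed.
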